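(* Let $a,d,b,k\in\mathbb{P}$ with $\gcd(a,d)=1$, $b\geq 2$ and $a\geq k-1$, and let $$A=\left(a,\ ba+d,\ b^2a+\tfrac{b^2-1}{b-1}d,\ \dots,\ b^ka+\tfrac{b^k-1}{b-1}d\right).$$ Then $$F(A)=\left((b-1)a-b+d+S_{a-1}\right)a-d,\qquad g(A)=\sum_{r=1}^{a-1}S_r+\frac{(a-1)\big((b-1)a+d-1\big)}{2},$$ where $S_r=\sum_{i=1}^k x_i$ for $(x_1,\dots,x_k)$ the greedy presentation of $r$ (in particular $x_k=\lfloor (b-1)r/(b^k-1)\rfloor$).
   Context: $\mathbb{P}$ denotes the positive integers, $\mathbb{N}$ the nonnegative integers. $\langle A\rangle$ is the numerical semigroup of all $\mathbb{N}$-linear combinations of entries of $A$; $F(A)$ is the largest integer not in $\langle A\rangle$ and $g(A)$ is the number of positive integers not in $\langle A\rangle$. Let $B_i=\frac{b^i-1}{b-1}$. The greedy presentation of $r\in\mathbb{N}$ is the tuple $(x_1,\dots,x_k)\in\mathbb{N}^k$ with $\sum_i B_i x_i=r$ obtained by the greedy algorithm (take $x_k$ maximal, then $x_{k-1}$ maximal for the remainder, etc.); equivalently $x_k=\lfloor (b-1)r/(b^k-1)\rfloor$, $x_i\in\{0,\dots,b\}$ for $i\le k-1$, and if $2\le i\le k-1$ and $x_i=b$ then $x_1=\dots=x_{i-1}=0$. *)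

From mathcomp Require Import all_boot all_order all_algebra ssrint.
Import Order.TTheory GRing.Theory Num.Theory.
Set Implicit Arguments. Unset Strict Implicit. Unset Printing Implicit Defensive.

(* B_i = (b^i - 1)/(b - 1) = b^0 + ... + b^(i-1) *)
Definition Bn (b i : nat) : nat := \sum_(j < i) b ^ j.

Definition genA (a d b k : nat) : seq nat :=
  [seq b ^ i * a + Bn b i * d | i <- iota 0 k.+1].

Definition in_sg (A : seq nat) (z : int) : Prop :=
  exists c : seq nat, size c = size A /\
    z = Posz (\sum_(i < size A) nth 0 c i * nth 0 A i)%N.

Definition is_frobenius (A : seq nat) (f : int) : Prop :=
  ~ in_sg A f /\ (forall z : int, (f < z)%R -> in_sg A z).

Definition is_genus (A : seq nat) (g : nat) : Prop :=
  exists s : seq nat, uniq s /\ size s = g /\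
    (forall n : nat, n \in s <-> (0 < n)%N /\ ~ in_sg A (Posz n)).

Fixpoint greedy (b k r : nat) : seq nat :=
  match k with
  | 0 => [::]
  | k'.+1 => rcons (greedy b k' (r %% Bn b k)) (r %/ Bn b k)
  end.

Definition Sr (b k r : nat) : nat := sumn (greedy b k r).

From mathcomp Require Import all_boot all_order all_algebra ssrint.
From mathcomp Require Import zify.
Import GRing.Theory Num.Theory.

(* Write c_0 a + sum_i c_i (b^i a + B_i d) as a (c_0 + (b - 1) M + P) + d M,
   where M = sum_i c_i B_i and P = sum_i c_i.  For the denominations B_i the
   greedy presentation of M minimises P, and (b - 1) R + S_R is nondecreasing
   in R; hence for 0 <= R < a the least element of <A> congruent to d R
   modulo a is w_R = a ((b - 1) R + S_R) + d R.  Selmer's formulas for this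
   Apery set give F(A) = w_(a-1) - a and g(A) = sum_R floor(w_R / a), and the
   latter is evaluated with sum_R floor(d R / a) = (a - 1) (d - 1) / 2. *)

Set Implicit Arguments.
Unset Strict Implicit.

Section Greedy.
Variable b : nat.
Hypothesis b_gt0 : (0 < b)%N.

Lemma Bn0 : Bn b 0 = 0. Proof. by rewrite /Bn big_ord0. Qed.

Lemma BnS i : Bn b i.+1 = b * Bn b i + 1.
Proof.
rewrite /Bn big_ord_recl big_distrr /= addnC; congr (_ + _).
by apply: eq_bigr => j _; rewrite expnS.
Qed.

Lemma Bn1 : Bn b 1 = 1. Proof. by rewrite BnS Bn0 muln0. Qed.

Lemma Bn_gt0 i : (0 < Bn b i.+1)%N. Proof. by rewrite BnS addn1. Qed.

Lemma expn_Bn i : b ^ i = (b - 1) * Bn b i + 1.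
Proof.
elim: i => [|i IHi]; first by rewrite Bn0 muln0.
by rewrite expnS IHi BnS; nia.
Qed.

Lemma SrS k r : Sr b k.+1 r = Sr b k (r %% Bn b k.+1) + r %/ Bn b k.+1.
Proof. by rewrite /Sr /= sumn_rcons. Qed.

Lemma Sr0 k : Sr b k 0 = 0.
Proof. by elim: k => [|k IHk] //; rewrite SrS mod0n div0n IHk. Qed.

Lemma SrMDl k c r : Sr b k.+1 (c * Bn b k.+1 + r) = Sr b k.+1 r + c.
Proof. by rewrite !SrS modnMDl divnMDl ?Bn_gt0 //; lia. Qed.

Lemma Sr_mulBn_le k : (Sr b k (b * Bn b k) <= b)%N.
Proof. by case: k => [|k] //; rewrite -[_ * _]addn0 SrMDl Sr0. Qed.

Lemma Sr_le_succ k r : (Sr b k r <= Sr b k r.+1 + (b - 1))%N.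
Proof.
elim: k r => [|k IHk] r //.
rewrite (divn_eq r (Bn b k.+1)) -addnS !SrMDl.
move: (r %% _) (ltn_pmod r (Bn_gt0 k)) => s s_lt.
have [s1_lt | s1_ge] := ltnP s.+1 (Bn b k.+1).
  rewrite !SrS (modn_small s_lt) (divn_small s_lt) (modn_small s1_lt) (divn_small s1_lt).
  by have := IHk s; lia.
(* The only carry is out of the top residue [B_(k+1) - 1 = b B_k], whose
   digit sum is at most [b]. *)
have -> : s.+1 = 1 * Bn b k.+1 + 0 by lia.
have -> : s = b * Bn b k by move: s1_ge s_lt; rewrite BnS; lia.
have top_lt : b * Bn b k < Bn b k.+1 by rewrite BnS addn1.
rewrite SrMDl Sr0 SrS (modn_small top_lt) (divn_small top_lt).
by have := Sr_mulBn_le k; lia.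
Qed.

Lemma Sr_lt_addBn k r : (0 < k)%N -> (Sr b k r < Sr b k (r + Bn b k.+1))%N.
Proof.
case: k => [|k] // _.
have := Sr_le_succ k.+1 (b * Bn b k.+1 + r).
by rewrite SrMDl (BnS k.+1) addnA addn1 [r + _]addnC; lia.
Qed.

Lemma leq_Sr_addMBn k r j : (0 < k)%N -> (Sr b k r + j <= Sr b k (r + j * Bn b k.+1))%N.
Proof.
move=> k_gt0; elim: j => [|j IHj]; first by rewrite !addn0.
have := Sr_lt_addBn (r + j * Bn b k.+1) k_gt0.
by rewrite mulSn (addnC (Bn b k.+1)) addnA; lia.
Qed.

Lemma Sr_S_le k r : (0 < k)%N -> (Sr b k.+1 r <= Sr b k r)%N.
Proof.
move=> k_gt0; have := leq_Sr_addMBn (r %% Bn b k.+1) (r %/ Bn b k.+1) k_gt0.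
by rewrite [r %% _ + _]addnC -divn_eq SrS.
Qed.

Lemma greedy_optimal k (c : nat -> nat) : (0 < k)%N ->
  (Sr b k (\sum_(i < k) c i * Bn b i.+1) <= \sum_(i < k) c i)%N.
Proof.
case: k => [|k] // _; elim: k => [|k IHk].
  by rewrite !big_ord1 Bn1 muln1 SrS Bn1 divn1.
rewrite big_ord_recr [leqRHS]big_ord_recr /= addnC SrMDl leq_add2r.
exact: leq_trans (Sr_S_le _ (ltn0Sn k)) IHk.
Qed.

Lemma size_greedy k r : size (greedy b k r) = k.
Proof. by elim: k r => [|k IHk] r //=; rewrite size_rcons IHk. Qed.

Lemma nth_greedyS k r (i : 'I_k.+1) :
  nth 0 (greedy b k.+1 r) i =
  if (i < k)%N then nth 0 (greedy b k (r %% Bn b k.+1)) i else r %/ Bn b k.+1.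
Proof.
rewrite /= nth_rcons size_greedy; case: ltnP => // i_ge.
by rewrite (_ : i == k :> nat) //; have := ltn_ord i; lia.
Qed.

Lemma greedy_sum k r : (0 < k)%N ->
  \sum_(i < k) nth 0 (greedy b k r) i * Bn b i.+1 = r.
Proof.
case: k => [|k] // _; elim: k r => [|k IHk] r.
  by rewrite big_ord1 /= Bn1 muln1 divn1.
rewrite big_ord_recr nth_greedyS ltnn.
under eq_bigr => i _ do rewrite nth_greedyS (ltn_ord i).
by rewrite IHk /= addnC -divn_eq.
Qed.

Lemma Sr_sum k r : \sum_(i < k) nth 0 (greedy b k r) i = Sr b k r.
Proof.
elim: k r => [|k IHk] r; first by rewrite big_ord0.
rewrite big_ord_recr nth_greedyS ltnn.
under eq_bigr => i _ do rewrite nth_greedyS (ltn_ord i).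
by rewrite IHk SrS.
Qed.

End Greedy.

Lemma eqn_mod_ltn_leq_add m x y : (x < y)%N -> x = y %[mod m] -> (x + m <= y)%N.
Proof.
move=> lt_xy /eqP; rewrite eq_sym (eqn_mod_dvd _ (ltnW lt_xy)) => /dvdn_leq; lia.
Qed.

Lemma sum_div_coprime a d : (0 < a)%N -> coprime a d ->
  2 * \sum_(0 <= R < a) (d * R) %/ a = (a - 1) * (d - 1).
Proof.
move=> a_gt0 co_ad.
(* Pair [R] with [a - R]: the fractional parts of [dR/a] and [d(a-R)/a] are
   nonzero and add up to one. *)
have pair R : (0 < R < a)%N -> (d * R) %/ a + (d * (a - R)) %/ a = d - 1.
  move=> R_in.
  have sum_da : d * R + d * (a - R) = d * a by rewrite -mulnDr subnKC //; lia.
  have ndvd : (d * R) %% a != 0.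
    rewrite -/(dvdn _ _) Gauss_dvdr //; apply/negP => /dvdn_leq; lia.
  have carry : (a <= (d * R) %% a + (d * (a - R)) %% a)%N.
    rewrite leqNgt; apply/negP => lt_a.
    have := modnDm (d * R) (d * (a - R)) a.
    rewrite sum_da modnMl modn_small //; move: ndvd.
    move: (_ %% a) (_ %% a) => x y; lia.
  have := divnD (d * R) (d * (a - R)) a_gt0; rewrite sum_da mulnK // carry.
  by move: (_ %/ a) (_ %/ a) => x y; lia.
rewrite big_ltn // muln0 div0n add0n mul2n -addnn.
rewrite [X in _ + X]big_nat_rev -big_split /=.
rewrite (eq_big_nat _ _ (F2 := fun=> d - 1)) ?sum_nat_const_nat ?subn1 //.
by move=> R R_in; rewrite -subn1 -(pair R R_in) (_ : 1 + a - R.+1 = a - R) //; lia.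
Qed.

Section Apery.
Variables a d b k : nat.
Hypotheses (a_gt0 : (0 < a)%N) (d_gt0 : (0 < d)%N) (b_gt0 : (0 < b)%N) (k_gt0 : (0 < k)%N).
Hypothesis coprime_ad : coprime a d.

Definition apery R := a * ((b - 1) * R + Sr b k R) + d * R.

Definition inv_d := (egcdn d a).1.

Definition residue n := (inv_d * n) %% a.

Lemma mul_inv_d : d * inv_d = 1 %[mod a].
Proof.
rewrite /inv_d; case: egcdnP => //= km kn def_km _.
by rewrite mulnC def_km gcdnC (eqP coprime_ad) modnMDl.
Qed.

Lemma residue_lt n : (residue n < a)%N. Proof. exact: ltn_pmod. Qed.

Lemma residue_eq m n : m = n %[mod a] -> residue m = residue n.
Proof. by move=> eq_mn; rewrite /residue -modnMmr eq_mn modnMmr. Qed.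

Lemma residue_mul_d M : residue (d * M) = M %% a.
Proof. by rewrite /residue mulnA [inv_d * d]mulnC -modnMml mul_inv_d modnMml mul1n. Qed.

Lemma mul_d_residue n : d * residue n = n %[mod a].
Proof. by rewrite /residue modnMmr mulnA -modnMml mul_inv_d modnMml mul1n. Qed.

Lemma apery_mod R : apery R = d * R %[mod a].
Proof. by rewrite /apery mulnC modnMDl. Qed.

Lemma residue_apery_sub R j : (R < a)%N -> (j * a <= apery R)%N ->
  residue (apery R - j * a) = R.
Proof.
move=> lt_Ra le_ja; rewrite -[RHS](modn_small lt_Ra) -residue_mul_d.
by apply: residue_eq; rewrite -apery_mod -[in RHS](subnKC le_ja) modnMDl.
Qed.

Lemma apery_leq : {homo apery : R R' / (R <= R')%N}.
Proof.
apply: homo_leq => [R|R R1 R2|R]; [exact: leqnn | exact: leq_trans |].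
rewrite /apery leq_add ?leq_mul2l ?leqnSn ?orbT //.
by have := Sr_le_succ b_gt0 k R; rewrite mulnS; lia.
Qed.

Lemma size_genA : size (genA a d b k) = k.+1.
Proof. by rewrite size_map size_iota. Qed.

Lemma nth_genA i : (i < k.+1)%N -> nth 0 (genA a d b k) i = b ^ i * a + Bn b i * d.
Proof. by move=> lt_ik; rewrite (nth_map 0) ?size_iota // nth_iota. Qed.

Lemma sum_genA (c : seq nat) :
  \sum_(i < k.+1) nth 0 c i * nth 0 (genA a d b k) i =
  a * (nth 0 c 0 + (b - 1) * \sum_(i < k) nth 0 c i.+1 * Bn b i.+1
       + \sum_(i < k) nth 0 c i.+1)
  + d * \sum_(i < k) nth 0 c i.+1 * Bn b i.+1.
Proof.
rewrite big_ord_recl nth_genA // Bn0 mul0n addn0 expn0 mul1n.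
under eq_bigr => i _ do rewrite lift0 nth_genA ?ltnS // (expn_Bn b_gt0).
rewrite !mulnDr -!addnA mulnC; congr (_ + _).
rewrite !big_distrr -!big_split /=; apply: eq_bigr => i _; nia.
Qed.

Lemma in_sg_apery_add R j : in_sg (genA a d b k) (Posz (apery R + j * a)).
Proof.
exists (j :: greedy b k R); rewrite size_genA /= size_greedy; split => //.
by rewrite sum_genA /= greedy_sum // Sr_sum /apery; lia.
Qed.

Lemma in_sgP n : in_sg (genA a d b k) (Posz n) <-> (apery (residue n) <= n)%N.
Proof.
split.
  case=> c [_]; rewrite size_genA sum_genA => -[->].
  set M := \sum_(i < k) _ * _; set P := \sum_(i < k) _.
  have opt_P : (Sr b k M <= P)%N := greedy_optimal b_gt0 (fun i => nth 0 c i.+1) k_gt0.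
  rewrite [a * _]mulnC (residue_eq (modnMDl _ _ _)) residue_mul_d.
  apply: leq_trans (apery_leq (leq_mod M a)) _.
  by rewrite /apery; nia.
move=> le_n.
have /dvdnP [j def_j] : a %| n - apery (residue n).
  by rewrite -eqn_mod_dvd // apery_mod mul_d_residue.
by rewrite -(subnKC le_n) def_j; apply: in_sg_apery_add.
Qed.

Lemma is_frobenius_genA : is_frobenius (genA a d b k) ((apery a.-1)%:Z - a%:Z)%R.
Proof.
have ge_a : (a <= (apery a.-1).+1)%N.
  rewrite /apery -addnS (leq_trans _ (leq_addl _ _)) //.
  by have := leq_pmull a.-1 d_gt0; lia.
split.
  have [lt_a | le_a] := ltnP (apery a.-1) a; first by case=> c [_]; lia.
  rewrite (_ : _ - _ = Posz (apery a.-1 - 1 * a))%R; last by lia.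
  by rewrite in_sgP residue_apery_sub ?mul1n; lia.
case=> [n | m] lt_n; last by lia.
apply/in_sgP; rewrite leqNgt; apply/negP => gt_n.
have le_max : (apery (residue n) <= apery a.-1)%N.
  by apply: apery_leq; have := residue_lt n; lia.
have eq_n : n = apery (residue n) %[mod a] by rewrite apery_mod mul_d_residue.
by have := eqn_mod_ltn_leq_add gt_n eq_n; lia.
Qed.

Lemma apery0 : apery 0 = 0. Proof. by rewrite /apery Sr0 !muln0. Qed.

Definition gaps := [seq apery R - j * a | R <- iota 0 a, j <- iota 1 (apery R %/ a)].

Lemma gap_index R j : R \in iota 0 a -> j \in iota 1 (apery R %/ a) ->
  [/\ (R < a)%N, (0 < j)%N & (j * a <= apery R)%N].
Proof.
rewrite !mem_iota add0n add1n ltnS /= => R_lt /andP [j_gt0 j_le].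
by split; rewrite // -leq_divRL.
Qed.

Lemma mem_gaps n : n \in gaps <-> (0 < n)%N /\ ~ in_sg (genA a d b k) (Posz n).
Proof.
rewrite in_sgP; split.
  case/allpairsPdep=> R [j [R_in j_in ->]].
  have [R_lt j_gt0 le_ja] := gap_index R_in j_in.
  have ja_gt0 : (0 < j * a)%N by rewrite muln_gt0 j_gt0.
  rewrite residue_apery_sub //; split; last first.
    by apply/negP; rewrite -ltnNge ltn_subrL ja_gt0 (leq_trans ja_gt0 le_ja).
  rewrite lt0n; apply/negP => /eqP gap0.
  have R0 : R = 0 by rewrite -(residue_apery_sub R_lt le_ja) gap0 /residue muln0 mod0n.
  by move: j_in; rewrite R0 apery0 div0n.
move=> [n_gt0 /negP]; rewrite -ltnNge; set R := residue n => lt_n.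
have /dvdnP [j def_j] : a %| apery R - n.
  by rewrite -(eqn_mod_dvd _ (ltnW lt_n)) apery_mod mul_d_residue.
have ja_gt0 : (0 < j * a)%N by rewrite -def_j subn_gt0.
apply/allpairsPdep; exists R, j; rewrite !mem_iota residue_lt.
split => //; last by rewrite -def_j subKn // ltnW.
rewrite add1n ltnS leq_divRL // -def_j leq_subr andbT.
by move: ja_gt0; rewrite muln_gt0 => /andP [].
Qed.

Lemma gaps_uniq : uniq gaps.
Proof.
apply: allpairs_uniq_dep => [|R _|]; rewrite ?iota_uniq //.
move=> p1 p2 /allpairsPdep [R1 [j1 [R1_in j1_in ->]]].
move=> /allpairsPdep [R2 [j2 [R2_in j2_in ->]]] /= eq_gap.
have [R1_lt _ le_j1] := gap_index R1_in j1_in.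
have [R2_lt _ le_j2] := gap_index R2_in j2_in.
have eq_R : R1 = R2.
  by rewrite -(residue_apery_sub R1_lt le_j1) eq_gap residue_apery_sub.
subst R2; congr Tagged; apply/eqP; rewrite -(eqn_pmul2r a_gt0); apply/eqP; lia.
Qed.

Lemma size_gaps : size gaps = \sum_(0 <= R < a) apery R %/ a.
Proof.
rewrite size_allpairs_dep sumnE big_map /index_iota subn0.
by apply: eq_bigr => R _; rewrite size_iota.
Qed.

Lemma is_genus_genA : is_genus (genA a d b k) (\sum_(0 <= R < a) apery R %/ a).
Proof.
exists gaps; rewrite -size_gaps; split; first exact: gaps_uniq.
by split; last exact: mem_gaps.
Qed.

Lemma sum_apery_div : \sum_(0 <= R < a) apery R %/ a =
  \sum_(1 <= r < a) Sr b k r + (a - 1) * ((b - 1) * a + d - 1) %/ 2.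
Proof.
rewrite (eq_bigr (fun R => (b - 1) * R + Sr b k R + (d * R) %/ a)); last first.
  by move=> R _; rewrite /apery mulnC divnMDl.
rewrite !big_split /= -big_distrr /=.
rewrite [\sum_(0 <= R < a) Sr b k R](big_ltn a_gt0) Sr0 add0n.
have two_sum_R : 2 * \sum_(0 <= R < a) R = a * a.-1.
  by rewrite bin2_sum -(mul_bin_diag a 1) bin1.
have := sum_div_coprime a_gt0 coprime_ad.
move: two_sum_R; move: (\sum_(0 <= R < a) R) (\sum_(0 <= R < a) _ %/ a) => T U two_T two_U.
have -> : (a - 1) * ((b - 1) * a + d - 1) = 2 * ((b - 1) * T + U).
  rewrite mulnDr mulnCA two_T two_U -subn1 -addnBA //.
  move: (b - 1) => c; nia.
by rewrite mulKn // addnAC addnC.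
Qed.

End Apery.

Local Open Scope ring_scope.

Theorem theorem3p5 (a d b k : nat) :
  (0 < a)%N -> (0 < d)%N -> (0 < b)%N -> (0 < k)%N ->
  coprime a d -> (2 <= b)%N -> (k.-1 <= a)%N ->
  is_frobenius (genA a d b k)
    ((((b - 1) * a)%:Z - b%:Z + d%:Z + (Sr b k (a - 1))%:Z) * a%:Z - d%:Z)%R /\
  is_genus (genA a d b k)
    ((\sum_(1 <= r < a) Sr b k r) + (a - 1) * ((b - 1) * a + d - 1) %/ 2)%N.
Proof.
(* Neither [2 <= b] nor [k.-1 <= a] is needed. *)
move=> a_gt0 d_gt0 b_gt0 k_gt0 coprime_ad _ _.
have -> : (((b - 1) * a)%:Z - b%:Z + d%:Z + (Sr b k (a - 1))%:Z) * a%:Z - d%:Z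
          = (apery a d b k a.-1)%:Z - a%:Z.
  rewrite /apery -subn1; nia.
split; first exact: is_frobenius_genA.
by rewrite -sum_apery_div //; apply: is_genus_genA.
Qed.
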